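(* Let $R$ be a commutative ring with unit and let $G$ be a group with an upper central series $1=G_0\subset G_1\subset\cdots\subset G_n=G$ (so $G_i/G_{i-1}=Z(G/G_{i-1})$). If $G$ is $R$-torsion-free, then each factor group $G_i/G_{i-1}$, $i=1,\dots,n$, is $R$-torsion-free.
   Context: A group $G$ is $R$-torsion-free if for every finite subgroup $H\le G$, $|H|\cdot 1_R$ is invertible in $R$; equivalently, for every prime $p$ such that $G$ has a non-identity element $g$ with $g^p=1$, $p\cdot 1_R$ is invertible in $R$. *)

From mathcomp Require Import all_boot all_algebra.
Set Implicit Arguments. Unset Strict Implicit. Unset Printing Implicit Defensive.
Import GRing.Theory.

Record AbsGroup := {
  gcar :> Type;
  gmul : gcar -> gcar -> gcar;
  ginv : gcar -> gcar;
  gone : gcar;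
  gmulA : forall x y z, gmul x (gmul y z) = gmul (gmul x y) z;
  gmul1 : forall x, gmul gone x = x;
  gmulV : forall x, gmul (ginv x) x = gone
}.

Fixpoint gexp (G : AbsGroup) (g : G) (n : nat) : G :=
  match n with 0 => gone G | S k => gmul g (gexp g k) end.

Definition gcomm (G : AbsGroup) (x y : G) : G :=
  gmul (gmul (ginv x) (ginv y)) (gmul x y).

(* Upper central series, as subgroups of G:
   G_0 = 1, and G_(i+1) is the preimage of Z(G/G_i), i.e.
   G_(i+1) = { x | forall y, [x,y] \in G_i }. *)
Fixpoint upper_central (G : AbsGroup) (i : nat) : G -> Prop :=
  match i with
  | 0 => fun x => x = gone G
  | S k => fun x => forall y, upper_central k (gcomm x y)
  end.

Definition ring_invertible (R : comPzRingType) (a : R) : Prop :=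
  exists b : R, (a * b = 1)%R.

Definition R_torsion_free (R : comPzRingType) (G : AbsGroup) : Prop :=
  forall p : nat, prime p ->
    (exists g : G, g <> gone G /\ gexp g p = gone G) ->
    ring_invertible (p%:R : R)%R.

(* The factor group G_i/G_(i-1) is R-torsion-free: for every prime p such that
   G_i/G_(i-1) has a non-identity element of order dividing p, i.e. some
   g in G_i with g notin G_(i-1) and g^p in G_(i-1), p*1_R is invertible. *)
Definition factor_R_torsion_free (R : comPzRingType) (G : AbsGroup) (i : nat) : Prop :=
  forall p : nat, prime p ->
    (exists g : G, @upper_central G i g /\ ~ @upper_central G i.-1 g
                   /\ @upper_central G i.-1 (gexp g p)) ->
    ring_invertible (p%:R : R)%R.

From mathcomp Require Import all_boot all_algebra.
From Stdlib Require Import Classical.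

(* If G has no element of order p, neither has any factor Z_(k+1)/Z_k of its
   upper central series.  By induction on k: for g in Z_(k+2) with g^p in
   Z_(k+1) and any y, the commutator [g,y] lies in Z_(k+1), and modulo Z_k we
   have [g,y]^p = [g^p,y], which lies in Z_k; so [g,y] lies in Z_k by the
   induction hypothesis, i.e. g lies in Z_(k+1). *)

Section UpperCentralSeries.
Variable G : AbsGroup.
Local Notation "x * y" := (@gmul G x y).
Local Notation "x ^-1" := (@ginv G x).
Local Notation "1" := (gone G).
Local Notation Z := (@upper_central G).

Lemma mulgV (x : G) : x * x^-1 = 1.
Proof.
rewrite -[x * x^-1]gmul1 -[in X in X * _ = _](gmulV x^-1).
by rewrite -gmulA [x^-1 * (x * x^-1)]gmulA gmulV gmul1 gmulV.
Qed.

Lemma mulg1 (x : G) : x * 1 = x.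
Proof. by rewrite -(gmulV x) gmulA mulgV gmul1. Qed.

Lemma mulKg (x y : G) : x^-1 * (x * y) = y.
Proof. by rewrite gmulA gmulV gmul1. Qed.

Lemma mulKVg (x y : G) : x * (x^-1 * y) = y.
Proof. by rewrite gmulA mulgV gmul1. Qed.

Lemma invgK (x : G) : (x^-1)^-1 = x.
Proof. by rewrite -[LHS]mulg1 -(gmulV x) gmulA gmulV gmul1. Qed.

Lemma invMg (x y : G) : (x * y)^-1 = y^-1 * x^-1.
Proof.
have xyK : (x * y) * (y^-1 * x^-1) = 1 by rewrite -gmulA mulKVg mulgV.
by rewrite -[LHS]mulg1 -xyK gmulA gmulV gmul1.
Qed.

Lemma invg1 : 1^-1 = 1.
Proof. by rewrite -[LHS]mulg1 gmulV. Qed.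

Ltac gsimpl := repeat rewrite ?invMg ?invgK ?invg1 -?gmulA
                              ?mulKg ?mulKVg ?gmulV ?mulgV ?gmul1 ?mulg1.

Lemma gcomm1l (y : G) : gcomm 1 y = 1.
Proof. by rewrite /gcomm; gsimpl. Qed.

Lemma gcommMl (a b y : G) :
  gcomm (a * b) y = (b^-1 * gcomm a y * b) * gcomm b y.
Proof. by rewrite /gcomm; gsimpl. Qed.

Lemma gcommVl (a y : G) : gcomm a^-1 y = (a^-1)^-1 * (gcomm a y)^-1 * a^-1.
Proof. by rewrite /gcomm; gsimpl. Qed.

Lemma gcommJl (a g y : G) :
  gcomm (g^-1 * a * g) y = g^-1 * gcomm a (g * y * g^-1) * g.
Proof. by rewrite /gcomm; gsimpl. Qed.

Definition normal_subset (S : G -> Prop) :=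
  [/\ S 1, (forall a b, S a -> S b -> S (a * b)),
      (forall a, S a -> S a^-1) & (forall a g, S a -> S (g^-1 * a * g))].

Lemma normal_upper_central k : normal_subset (Z k).
Proof.
elim: k => [|k [Z1 ZM ZV ZJ]].
  split=> /= [|a b -> ->|a ->|a g ->]; first by [].
  - exact: gmul1.
  - exact: invg1.
  - by rewrite mulg1 gmulV.
split=> /= [y|a b Za Zb y|a Za y|a g Za y].
- by rewrite gcomm1l.
- by rewrite gcommMl; apply: ZM; [apply: ZJ|].
- by rewrite gcommVl; apply/ZJ/ZV.
- by rewrite gcommJl; apply: ZJ.
Qed.

Lemma gcommXl_mod k (g y : G) : Z k.+1 (gcomm g y) ->
  forall m, exists2 z, Z k z & gcomm (gexp g m) y = gexp (gcomm g y) m * z.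
Proof.
have [Z1 ZM _ ZJ] := normal_upper_central k.
set c := gcomm g y => Zc; elim=> [|m [z Zz IHm]].
  by exists 1; rewrite //= gcomm1l mulg1.
exists ((gexp c m)^-1 * gcomm c (gexp g m) * gexp c m * z).
  by apply: ZM => //; apply/ZJ/Zc.
by rewrite /= gcommMl IHm [gcomm c _]/gcomm; gsimpl.
Qed.

Lemma upper_central_factor_torsion_free p :
    (forall g : G, gexp g p = 1 -> g = 1) ->
  forall k g, Z k.+1 g -> Z k (gexp g p) -> Z k g.
Proof.
move=> p_free; elim=> [|k IHk] g Zg Zgp; first exact: p_free.
move=> y; apply: IHk; first exact: Zg.
have [_ ZM ZV _] := normal_upper_central k.
have [z Zz gpyE] := @gcommXl_mod k g y (Zg y) p.
have -> : gexp (gcomm g y) p = gcomm (gexp g p) y * z^-1.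
  by rewrite gpyE; gsimpl.
by apply: ZM; [apply: Zgp | apply: ZV].
Qed.

End UpperCentralSeries.

Theorem lemma3p4 (R : comPzRingType) (G : AbsGroup) (n : nat) :
  (forall x : G, @upper_central G n x) ->
  R_torsion_free R G ->
  forall i : nat, 1 <= i <= n -> factor_R_torsion_free R G i.
Proof.
move=> _ torsion_freeG [|k] // _ p p_prime [g [Zg [notZg Zgp]]].
apply: torsion_freeG => //; apply: NNPP => no_p_torsion; apply: notZg.
apply: (@upper_central_factor_torsion_free G p) => // h hp1.
by apply: NNPP => h_neq1; apply: no_p_torsion; exists h.
Qed.
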